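(* Let $\mathcal{A}$ be a finite-state invertible synchronous automaton over $\Sigma$ such that the semigroup $S(\mathcal{A})$ contains the identity map of $\Sigma^*$. Then the group of units of $S(\mathcal{A})$ is isomorphic to a self-similar group.
   Context: A synchronous automaton is $(Q,\Sigma,t,o)$ with $Q$ a set of states, $\Sigma$ a finite alphabet, $t:Q\times\Sigma\to Q$ and $o:Q\times\Sigma\to\Sigma$; it is invertible if for each $q$ the map $\sigma\mapsto o(q,\sigma)$ is a permutation of $\Sigma$. Each state $q$ induces $q:\Sigma^*\to\Sigma^*$ by $q(\emptyset)=\emptyset$, $q(\sigma w)=o(q,\sigma)\,q'(w)$ with $q'=t(q,\sigma)$. $S(\mathcal{A})$ is the semigroup generated by the states under composition. A self-similar group is the group generated by the states of an invertible synchronous automaton with possibly infinitely many states. *)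

From mathcomp Require Import all_boot.
Set Implicit Arguments. Unset Strict Implicit. Unset Printing Implicit Defensive.

Record automaton (Q Sigma : Type) := Automaton {
  trans : Q -> Sigma -> Q;
  out   : Q -> Sigma -> Sigma }.

Definition invertible (Q Sigma : Type) (A : automaton Q Sigma) : Prop :=
  forall q : Q, bijective (out A q).

Fixpoint act (Q Sigma : Type) (A : automaton Q Sigma) (q : Q) (w : seq Sigma)
  : seq Sigma :=
  match w with
  | [::] => [::]
  | s :: w' => out A q s :: act A (trans A q s) w'
  end.

Inductive in_semigroup (Q Sigma : Type) (A : automaton Q Sigma)
  : (seq Sigma -> seq Sigma) -> Prop :=
  | sg_gen (q : Q) : in_semigroup A (act A q)
  | sg_comp (f g : seq Sigma -> seq Sigma) :
      in_semigroup A f -> in_semigroup A g -> in_semigroup A (f \o g).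

(* Group of units of S(A) (the identity of Sigma^* lies in S(A) by hypothesis). *)
Definition unit_of_semigroup (Q Sigma : Type) (A : automaton Q Sigma)
  (f : seq Sigma -> seq Sigma) : Prop :=
  in_semigroup A f /\
  exists g, in_semigroup A g /\ f \o g = id /\ g \o f = id.

Inductive in_generated_group (Q Sigma : Type) (A : automaton Q Sigma)
  : (seq Sigma -> seq Sigma) -> Prop :=
  | gg_id : in_generated_group A id
  | gg_gen (q : Q) f : in_generated_group A f ->
      in_generated_group A (act A q \o f)
  | gg_inv (q : Q) (h f : seq Sigma -> seq Sigma) :
      cancel (act A q) h -> cancel h (act A q) ->
      in_generated_group A f -> in_generated_group A (h \o f).

Definition group_isomorphic (X Y : Type)
  (U : (X -> X) -> Prop) (G : (Y -> Y) -> Prop) : Prop :=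
  exists phi : (X -> X) -> (Y -> Y),
    (forall f, U f -> G (phi f)) /\
    (forall f g, U f -> U g -> phi (f \o g) = phi f \o phi g) /\
    (forall f g, U f -> U g -> phi f = phi g -> f = g) /\
    (forall h, G h -> exists2 f, U f & phi f = h).

(* Every f in S(A) is synchronous: f(a w) = f_1(a) f|_a(w), and its section
   f|_a again lies in S(A).  If f is a unit with inverse g then g|_(f_1 a) is
   inverse to f|_a and g_1 is inverse to f_1, so the units are closed under
   sections and have bijective root maps.  Hence the units themselves are the
   states of an invertible automaton whose state maps are the units, and the
   group this automaton generates is exactly the group of units. *)
From mathcomp Require Import all_boot.
From Stdlib Require Import FunctionalExtensionality.
Set Implicit Arguments. Unset Strict Implicit.

Section Synchronous.
Variable Sigma : Type.
Implicit Types f g : seq Sigma -> seq Sigma.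

Definition root_map f (a : Sigma) : Sigma := head a (f [:: a]).
Definition section f (a : Sigma) : seq Sigma -> seq Sigma :=
  fun w => behead (f (a :: w)).

Definition synchronous f :=
  f [::] = [::] /\ forall a w, f (a :: w) = root_map f a :: section f a w.

Lemma synchronous_comp f g :
  synchronous f -> synchronous g -> synchronous (f \o g).
Proof.
move=> [f0 fS] [g0 gS]; split; first by rewrite /= g0 f0.
move=> a w; rewrite /root_map /section /= !gS fS /=.
by rewrite [f (root_map g a :: _)]fS.
Qed.

Lemma section_comp f g a : synchronous f -> synchronous g ->
  section (f \o g) a = section f (root_map g a) \o section g a.
Proof.
move=> [_ fS] [_ gS]; apply: functional_extensionality => w.
by rewrite /section /= gS fS.
Qed.

Lemma root_map_comp f g a : synchronous f -> synchronous g ->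
  root_map (f \o g) a = root_map f (root_map g a).
Proof. by move=> [_ fS] [_ gS]; rewrite /root_map /= gS fS. Qed.

End Synchronous.

Lemma comp_id_cancel (X Y : Type) (f : Y -> X) (g : X -> Y) :
  f \o g = id -> cancel g f.
Proof. by move=> fg x; rewrite -[RHS]/(id x) -fg. Qed.

Section Units.
Variables (Sigma Q : Type) (A : automaton Q Sigma).
Implicit Types f g h : seq Sigma -> seq Sigma.

Lemma in_semigroup_synchronous f : in_semigroup A f -> synchronous f.
Proof. by elim=> [q | f' g _ Sf _ Sg]; [split | exact: synchronous_comp]. Qed.

Lemma in_semigroup_section f a :
  in_semigroup A f -> in_semigroup A (section f a).
Proof.
move=> Sf; elim: Sf a => [q | f' g Sf IHf Sg IHg] a; first exact: sg_gen.
rewrite section_comp; [exact: sg_comp | exact: in_semigroup_synchronous..].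
Qed.

Lemma unit_section f a : unit_of_semigroup A f -> unit_of_semigroup A (section f a).
Proof.
move=> [Sf [g [Sg [fg gf]]]].
have [syf syg] := (in_semigroup_synchronous Sf, in_semigroup_synchronous Sg).
have gfa : root_map g (root_map f a) = a by rewrite -root_map_comp // gf.
split; first exact: in_semigroup_section.
exists (section g (root_map f a)); split; first exact: in_semigroup_section.
by rewrite -{1}gfa -!section_comp // fg gf.
Qed.

Lemma unit_root_map_bij f : unit_of_semigroup A f -> bijective (root_map f).
Proof.
move=> [Sf [g [Sg [fg gf]]]].
have [syf syg] := (in_semigroup_synchronous Sf, in_semigroup_synchronous Sg).
by exists (root_map g) => a; rewrite -root_map_comp // ?gf ?fg.
Qed.

Lemma unit_comp f g : unit_of_semigroup A f -> unit_of_semigroup A g ->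
  unit_of_semigroup A (f \o g).
Proof.
move=> [Sf [f' [Sf' [ff' f'f]]]] [Sg [g' [Sg' [gg' g'g]]]].
split; first exact: sg_comp.
exists (g' \o f'); split; first exact: sg_comp.
split; apply: functional_extensionality.
- exact: can_comp (comp_id_cancel gg') (comp_id_cancel ff').
- exact: can_comp (comp_id_cancel f'f) (comp_id_cancel g'g).
Qed.

Lemma unit_inverse f h : unit_of_semigroup A f ->
  cancel f h -> unit_of_semigroup A h.
Proof.
move=> [Sf [g [Sg [fg gf]]]] fK.
have -> : h = g.
  apply: functional_extensionality => w.
  by rewrite -[w in LHS](congr1 (@^~ w) fg) /= fK.
by split=> //; exists f.
Qed.

Definition unit_state := {f | unit_of_semigroup A f}.

Definition unit_automaton : automaton unit_state Sigma :=
  Automaton (fun q a => exist _ (section (sval q) a) (unit_section a (svalP q)))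
            (fun q => root_map (sval q)).

Lemma act_unit_automaton q : act unit_automaton q = sval q.
Proof.
apply: functional_extensionality => w.
elim: w q => [|a w IH] [f Uf];
  have [f0 fS] := in_semigroup_synchronous (proj1 Uf); first by rewrite /= f0.
by rewrite /= IH fS.
Qed.

Lemma unit_automaton_invertible : invertible unit_automaton.
Proof. by move=> q; exact: unit_root_map_bij (svalP q). Qed.

Lemma unit_in_generated_group f :
  unit_of_semigroup A f -> in_generated_group unit_automaton f.
Proof.
move=> Uf; rewrite -[f]/(f \o id) -[f]/(sval (exist _ f Uf)).
rewrite -act_unit_automaton; exact/gg_gen/gg_id.
Qed.

(* [in_semigroup A id] is needed only for the empty product [gg_id]. *)
Lemma generated_group_unit f : in_semigroup A id ->
  in_generated_group unit_automaton f -> unit_of_semigroup A f.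
Proof.
move=> Sid; elim=> [|q g _ Ug | q h g qK _ _ Ug].
- by split=> //; exists id.
- by rewrite act_unit_automaton; exact: unit_comp (svalP q) Ug.
- apply: unit_comp Ug; apply: unit_inverse (svalP q) _.
  by rewrite -act_unit_automaton.
Qed.

End Units.

Theorem mainTheorem13 (Sigma Q : finType) (A : automaton Q Sigma) :
  invertible A ->
  in_semigroup A id ->
  exists (Sigma' : finType) (Q' : Type) (B : automaton Q' Sigma'),
    invertible B /\
    group_isomorphic (unit_of_semigroup A) (in_generated_group B).
Proof.
move=> _ Sid; exists Sigma, (unit_state A), (unit_automaton A).
split; first exact: unit_automaton_invertible.
exists id; split; first exact: unit_in_generated_group.
do 2!split=> //.
by move=> h Gh; exists h => //; exact: generated_group_unit Gh.
Qed.
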